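(* Let $n\geq 2$ and let $X\subsetneq Z\subseteq[n]$ with $|Z|\geq |X|+2$. If $W\subseteq[n]$ satisfies $W\notin \mathcal{B}_{[\emptyset,X]}\cup\mathcal{B}_{[Z,[n]]}$, then there exists $W_0$ with $X\subsetneq W_0\subsetneq Z$ and $|W_0|=|X|+1$ such that $W_0$ and $W$ are incomparable.
   Context: $\mathcal{B}_{[X,Y]}=\{U: X\subseteq U\subseteq Y\}$ for subsets $X\subseteq Y$ of $[n]$. *)

From mathcomp Require Import all_boot.
Set Implicit Arguments. Unset Strict Implicit. Unset Printing Implicit Defensive.

Definition Bint (n : nat) (X Y : {set 'I_n}) : {set {set 'I_n}} :=
  [set U : {set 'I_n} | (X \subset U) && (U \subset Y)].

Definition incomparable (n : nat) (A B : {set 'I_n}) : bool :=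
  ~~ (A \subset B) && ~~ (B \subset A).

From mathcomp Require Import all_boot zify.

(* Let [a] witness W ⊄ X and [b] witness Z ⊄ W.  Any W0 = X ∪ {c} with
   c ∈ Z \ X and c ≠ a contains no [a], so W ⊄ W0; and W0 ⊄ W as soon as
   c ∉ W or X ⊄ W.  If b ∉ X take c = b (then c ≠ a since a ∈ W); if b ∈ X
   then X ⊄ W, and |Z \ X| ≥ 2 leaves some c ∈ Z \ X other than a. *)

Section AddOnePoint.

Context {T : finType}.
Implicit Types (A B C : {set T}) (x y : T).

Lemma proper_setU1 A x : x \notin A -> A \proper x |: A.
Proof.
move=> xA; rewrite properE subsetUr; apply/subsetPn.
by exists x; rewrite ?setU11.
Qed.

Lemma setU1_proper A C x :
  A \subset C -> x \in C -> #|A| + 2 <= #|C| -> x |: A \proper C.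
Proof.
move=> sAC xC cardAC; rewrite properEcard subUset sub1set xC sAC /=.
by have := cardsU1 x A; lia.
Qed.

Lemma exists_other_in y A : 1 < #|A| -> exists2 x, x \in A & x != y.
Proof.
case/card_gt1P => x [x' [xA x'A xx']].
have [<- | xy] := eqVneq x y; last by exists x.
by exists x'; rewrite // eq_sym.
Qed.

End AddOnePoint.

Lemma setU1_incomparable n (A B : {set 'I_n}) x y :
  y \in B -> y \notin A -> x != y -> (x \notin B) || ~~ (A \subset B) ->
  incomparable (x |: A) B.
Proof.
move=> yB yA xy notsub; apply/andP; split.
- by rewrite subUset sub1set negb_and.
- by apply/subsetPn; exists y; rewrite // !inE negb_or eq_sym xy.
Qed.

Theorem lemma2p4 (n : nat) (X Z W : {set 'I_n}) :
  2 <= n ->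
  X \proper Z ->
  #|X| + 2 <= #|Z| ->
  W \notin (Bint set0 X :|: Bint Z [set: 'I_n]) ->
  exists W0 : {set 'I_n},
    [/\ X \proper W0, W0 \proper Z, #|W0| = #|X| + 1 & incomparable W0 W].
Proof.
move=> _ /andP [sXZ _] cardXZ.
rewrite in_setU !inE sub0set subsetT andbT negb_or.
case/andP => /subsetPn [a aW aX] /subsetPn [b bZ bW].
suff [c /setDP [cZ cX] /andP [ca notsub]] : exists2 c, c \in Z :\: X &
    (c != a) && ((c \notin W) || ~~ (X \subset W)).
  exists (c |: X); split.
  - exact: proper_setU1.
  - exact: setU1_proper.
  - by rewrite cardsU1 cX addnC.
  - exact: setU1_incomparable aW aX ca notsub.
have [bX | bX] := boolP (b \in X).
  have cardZX : 1 < #|Z :\: X| by rewrite cardsDS //; lia.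
  have [c cZX ca] := exists_other_in a (Z :\: X) cardZX.
  by exists c; rewrite // ca; apply/orP; right; apply/subsetPn; exists b.
exists b; first by rewrite inE bX.
by rewrite bW andbT; apply: contraNneq bW => ->.
Qed.
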